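(* Let $X$ be any normed space. Then $\mathcal{A}(X)=\mathcal{R}(X)\neq\emptyset$.
   Context: For a normed space $X$ let $S_X$ be its unit sphere, equipped with the norm topology and the kernel $k(x,y)=\|x-y\|$. For a positive regular Borel measure $\mu$ its potential is $U^\mu(x)=\int k(x,y)\,d\mu(y)$. Let $\mathfrak{M}_1(S_X)$ denote the regular Borel probability measures on $X$ concentrated on $S_X$, and $\mathfrak{M}_1^{\#}(S_X)$ those with finite support in $S_X$. For $\mu$ put $A(\mu,S_X):=\overline{\mathrm{conv}}\{U^\mu(x):x\in S_X\}=[\inf_{S_X}U^\mu,\sup_{S_X}U^\mu]$. Then $\mathcal{A}(X):=\bigcap_{\mu\in\mathfrak{M}_1(S_X)}A(\mu,S_X)$ and $\mathcal{R}(X):=\bigcap_{\mu\in\mathfrak{M}_1^{\#}(S_X)}A(\mu,S_X)$ (equivalently $\mathcal{R}(X)=\bigcap_n\bigcap_{w_1,\dots,w_n\in S_X}\overline{\mathrm{conv}}\{\frac1n\sum_j\|x-w_j\|:x\in S_X\}$). *)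

From HB Require Import structures.
From mathcomp Require Import all_boot all_order all_algebra.
From mathcomp Require Import all_classical all_reals all_analysis.
Set Implicit Arguments. Unset Strict Implicit. Unset Printing Implicit Defensive.
Import Order.TTheory GRing.Theory Num.Theory.
Import numFieldNormedType.Exports.
Local Open Scope classical_set_scope.
Local Open Scope ring_scope.

Section Defs.
Context {R : realType} {X : normedModType R}.

Definition borelX := g_sigma_algebraType (@open X).

Definition unit_sphere : set X := [set x : X | `|x| = 1].

Definition potential (mu : {measure set borelX -> \bar R}) (x : X) : R :=
  \int[mu]_(y in [set: borelX]) `|x - (y : X)|.

Definition regular (mu : {measure set borelX -> \bar R}) : Prop :=
  forall A : set borelX, measurable A ->
    mu A = ereal_inf [set mu U | U in [set U : set X | open U /\ A `<=` U]] /\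
    mu A = ereal_sup [set mu K | K in [set K : set X | compact K /\ K `<=` A]].

Definition M1 (mu : probability borelX R) : Prop :=
  regular mu /\ mu (~` unit_sphere) = 0%E.

Definition M1fin (mu : probability borelX R) : Prop :=
  M1 mu /\ exists F : set X, [/\ finite_set F, F `<=` unit_sphere & mu F = 1%E].

Definition Aset (mu : probability borelX R) : set R :=
  [set r : R | inf (potential mu @` unit_sphere) <= r <= sup (potential mu @` unit_sphere)].

Definition calA : set R := [set r : R | forall mu, M1 mu -> Aset mu r].
Definition calR : set R := [set r : R | forall mu, M1fin mu -> Aset mu r].

End Defs.
Arguments calA : clear implicits.
Arguments calR : clear implicits.

(* If mu and nu are finitely supported probabilities on the sphere, exchanging
   the two finite sums in  int U^mu dnu = int U^nu dmu  gives
   inf_S U^mu <= sup_S U^nu.  Hence the supremum over all such mu of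
   inf_S U^mu lies in every A(nu, S_X), so R(X) is nonempty.
   Conversely, a regular probability mu on the sphere is approximated uniformly
   in potential by finitely supported ones: choose a compact K of almost full
   measure in the sphere and a finite e-net s of K, and push mu forward along
   the map snap sending y to the first point of s within e of y.  By the
   triangle inequality |U^nu - U^mu| is at most the transport cost
   int ||snap y - y|| dmu, which is at most e on K and 2 off K.  Thus R(X) is
   contained in A(X); the reverse inclusion holds because M_1^#(S_X) is
   contained in M_1(S_X). *)

From mathcomp Require Import all_boot all_order all_algebra.
From mathcomp Require Import all_classical all_reals all_analysis.
From mathcomp Require Import measurable_realfun lra.
Set Implicit Arguments. Unset Strict Implicit. Unset Printing Implicit Defensive.
Import Order.TTheory GRing.Theory Num.Theory.
Import numFieldNormedType.Exports.
Local Open Scope classical_set_scope.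
Local Open Scope ring_scope.

Section inf_sup_bounds.
Variable R : realType.

Lemma inf_le_wsum (I : eqType) (A : set R) (s : seq I) (w a : I -> R) :
  has_lbound A -> {in s, forall i, A (a i)} -> (forall i, 0 <= w i) ->
  \sum_(i <- s) w i = 1 -> inf A <= \sum_(i <- s) w i * a i.
Proof.
move=> lA sA w0 w1; rewrite -[leLHS]mul1r -w1 mulr_suml !big_seq.
by apply: ler_sum => i si; rewrite ler_wpM2l //; exact: ge_inf (sA i si).
Qed.

Lemma wsum_le_sup (I : eqType) (A : set R) (s : seq I) (w a : I -> R) :
  has_ubound A -> {in s, forall i, A (a i)} -> (forall i, 0 <= w i) ->
  \sum_(i <- s) w i = 1 -> \sum_(i <- s) w i * a i <= sup A.
Proof.
move=> uA sA w0 w1; rewrite -[leRHS]mul1r -w1 mulr_suml !big_seq.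
by apply: ler_sum => i si; rewrite ler_wpM2l //; exact: ub_le_sup (sA i si).
Qed.

Lemma inf_image_le (T : Type) (S : set T) (f g : T -> R) (e : R) :
  S !=set0 -> has_lbound (f @` S) -> (forall x, S x -> f x <= g x + e) ->
  inf (f @` S) <= inf (g @` S) + e.
Proof.
move=> [x0 Sx0] lf fg; rewrite -lerBlDr; apply: lb_le_inf; first by exists (g x0), x0.
move=> _ [x Sx <-]; rewrite lerBlDr; apply: le_trans (fg x Sx).
by apply: (ge_inf lf); exists x.
Qed.

Lemma sup_image_le (T : Type) (S : set T) (f g : T -> R) (e : R) :
  S !=set0 -> has_ubound (f @` S) -> (forall x, S x -> g x <= f x + e) ->
  sup (g @` S) <= sup (f @` S) + e.
Proof.
move=> [x0 Sx0] uf gf; apply: ge_sup; first by exists (g x0), x0.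
move=> _ [x Sx <-]; apply: le_trans (gf x Sx) _; rewrite lerD2r.
by apply: (ub_le_sup uf); exists x.
Qed.

End inf_sup_bounds.

Section borel_measurable.
Variables (T : ptopologicalType) (R : realType).
Local Notation B := (g_sigma_algebraType (@open T)).

Lemma open_borel_measurable (U : set T) : open U -> measurable (U : set B).
Proof. exact: sub_sigma_algebra. Qed.

Lemma closed_borel_measurable (U : set T) : closed U -> measurable (U : set B).
Proof.
by move=> /closed_openC/open_borel_measurable/measurableC; rewrite setCK.
Qed.

Lemma compact_borel_measurable (U : set T) :
  hausdorff_space T -> compact U -> measurable (U : set B).
Proof. by move=> hT /(compact_closed hT)/closed_borel_measurable. Qed.

Lemma continuous_borel_measurable (f : T -> R) :
  continuous f -> measurable_fun setT (f : B -> R).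
Proof.
move=> cf; apply: (measurability _ (RGenOpens.measurableE R)).
move=> _ [_ [a [b ->] <-]]; rewrite setTI; apply: open_borel_measurable.
by move/continuousP: cf; apply; exact: interval_open.
Qed.

End borel_measurable.

Section finitely_supported_integral.
Local Open Scope ereal_scope.
Context d (T : measurableType d) (R : realType).
Variable mu : {measure set T -> \bar R}.
Hypothesis measurable_points : forall x : T, measurable [set x].

Let set_seq_cons (z : T) (s : seq T) : [set` (z :: s)] = z |` [set` s].
Proof.
apply/seteqP; split => y; rewrite /= in_cons; first by case/orP=> [/eqP|]; [left|right].
by case=> [->|ys]; rewrite ?eqxx ?ys ?orbT.
Qed.

Lemma measurable_set_seq (s : seq T) : measurable [set` s].
Proof.
elim: s => [|z s IH]; first by rewrite set_nil.
by rewrite set_seq_cons; exact: measurableU.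
Qed.

Lemma ge0_integral_fin_supp (s : seq T) (f : T -> \bar R) :
  uniq s -> mu (~` [set` s]) = 0 -> measurable_fun setT f -> (forall y, 0 <= f y) ->
  \int[mu]_y f y = \sum_(z <- s) f z * mu [set z].
Proof.
move=> us mus0 mf f0.
rewrite (ge0_negligible_integral _ _ _ _ mus0) //;
  last exact: (measurableC (measurable_set_seq _)).
rewrite setTD setCK; elim: s us {mus0} => [_|z s IH /andP[zs us]].
  by rewrite set_nil integral_set0 big_nil.
rewrite set_seq_cons ge0_integral_setU //; last 3 first.
- exact: measurable_set_seq.
- exact: measurable_funS mf.
- by rewrite disj_set2E; apply/eqP/seteqP; split => // y [/= -> ys]; move/negP: zs.
rewrite big_cons IH // (eq_integral (cst (f z))); last by move=> y; rewrite inE => ->.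
by rewrite integral_cst.
Qed.

Lemma measure_fin_supp (s : seq T) : uniq s -> mu (~` [set` s]) = 0 ->
  \sum_(z <- s) mu [set z] = mu setT.
Proof.
move=> us mus0; rewrite -[RHS]mul1e -integral_cst //.
rewrite (ge0_integral_fin_supp us mus0) //.
by apply: eq_bigr => z _; rewrite mul1e.
Qed.

End finitely_supported_integral.

Section measure_lemmas.
Local Open Scope ereal_scope.
Context d (T : measurableType d) (R : realType).
Variable mu : {measure set T -> \bar R}.

Lemma measureI_conull (F B : set T) : measurable F -> measurable B ->
  mu (~` F) = 0 -> mu B = mu (B `&` F).
Proof.
move=> mF mB muF0; rewrite (measureDI mu mB mF) [X in X + _](_ : _ = 0) ?add0e //.
apply/eqP; rewrite eq_le measure_ge0 andbT -muF0.
by apply: le_measure; rewrite ?inE; [exact: measurableD|exact: measurableC|move=> y []].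
Qed.

Lemma ge0_le_integralD (f g h : T -> R) :
  measurable_fun setT f -> measurable_fun setT g -> measurable_fun setT h ->
  (forall y, 0 <= f y)%R -> (forall y, 0 <= g y)%R -> (forall y, 0 <= h y)%R ->
  (forall y, f y <= g y + h y)%R ->
  \int[mu]_y (f y)%:E <= \int[mu]_y (g y)%:E + \int[mu]_y (h y)%:E.
Proof.
move=> /measurable_EFinP mf /measurable_EFinP mg /measurable_EFinP mh f0 g0 h0 fgh.
rewrite -ge0_integralD //; try by move=> y _; rewrite lee_fin.
apply: ge0_le_integral => //; first by move=> y _; rewrite lee_fin.
- exact: emeasurable_funD.
- by move=> y _; rewrite -EFinD lee_fin.
Qed.

End measure_lemmas.

Section potential.
Context {R : realType} {X : normedModType R}.
Local Notation T := (@borelX R X).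

Lemma dist_continuous (x : X) : continuous (fun y : X => `|x - y|).
Proof.
move=> y; apply: (@continuous_comp _ _ _ (fun y : X => x - y) (@Num.norm _ X)).
  by apply: continuousB; [exact: cst_continuous | by move=> ?; exact: cvg_id].
exact: norm_continuous.
Qed.

Lemma measurable_dist (x : X) : measurable_fun setT (fun y : T => `|x - y|).
Proof. exact (continuous_borel_measurable (@dist_continuous x)). Qed.

Lemma measurable_compact (K : set X) : compact K -> measurable (K : set T).
Proof. by apply: compact_borel_measurable; exact: norm_hausdorff. Qed.

Lemma borel_measurable_set1 (x : T) : measurable [set x].
Proof. by apply: measurable_compact; exact: compact_set1. Qed.

Lemma measurable_unit_sphere : measurable (unit_sphere : set T).
Proof.
have := continuous_borel_measurable (@norm_continuous _ X) measurableT
  (measurable_set1 (1 : R)).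
by rewrite setTI.
Qed.

Lemma unit_sphere_nonempty (mu : probability T R) :
  mu (~` unit_sphere) = 0%E -> (unit_sphere : set X) !=set0.
Proof.
move=> mu0; apply/set0P/negP => /eqP S0.
by move: mu0; rewrite S0 setC0 probability_setT => /eqP; rewrite onee_eq0.
Qed.

Lemma potential_ge0 (mu : probability T R) (x : X) : 0 <= potential mu x.
Proof. by apply: Rintegral_ge0 => y _. Qed.

Lemma has_lbound_potential (mu : probability T R) :
  has_lbound (potential mu @` unit_sphere).
Proof. by exists 0 => _ [x _ <-]; exact: potential_ge0. Qed.

Section concentrated.
Variable mu : probability T R.
Hypothesis mu_sphere : mu (~` unit_sphere) = 0%E.

Lemma integral_dist_le (x : X) :
  (\int[mu]_y (`|x - y|)%:E <= (`|x| + 1)%:E)%E.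
Proof.
rewrite (ge0_negligible_integral _ _ _ _ mu_sphere) //; last 2 first.
- exact: (measurableC measurable_unit_sphere).
- by move/measurable_EFinP: (measurable_dist x).
rewrite setTD setCK.
apply: (@le_trans _ _ (\int[mu]_(y in unit_sphere) (`|x| + 1)%:E)%E).
  apply: ge0_le_integral => //.
  - exact: measurable_unit_sphere.
  - apply: (measurable_funS measurableT) => //.
    by move/measurable_EFinP: (measurable_dist x).
  - by move=> y Sy; rewrite lee_fin -Sy ler_normB.
rewrite integral_cst; last exact: measurable_unit_sphere.
rewrite -[leRHS]mule1 lee_wpmul2l ?lee_fin ?addr_ge0 //.
by apply: probability_le1; exact: measurable_unit_sphere.
Qed.

Lemma potentialE (x : X) : (potential mu x)%:E = (\int[mu]_y (`|x - y|)%:E)%E.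
Proof.
rewrite /potential /Rintegral fineK // ge0_fin_numE; last exact: integral_ge0.
exact: le_lt_trans (integral_dist_le x) (ltey _).
Qed.

Lemma potential_le2 (x : X) : unit_sphere x -> potential mu x <= 2.
Proof.
by move=> Sx; rewrite -lee_fin potentialE (le_trans (integral_dist_le x)) // Sx.
Qed.

Lemma has_ubound_potential : has_ubound (potential mu @` unit_sphere).
Proof. by exists 2 => _ [x Sx <-]; exact: potential_le2. Qed.

End concentrated.
End potential.

Section finitely_supported_potential.
Context {R : realType} {X : normedModType R}.
Local Notation T := (@borelX R X).

Lemma regular_fin_supp (nu : probability T R) (F : set X) :
  finite_set F -> nu (~` F) = 0%E -> regular nu.
Proof.
move=> fF nuF0 A mA.
have mF : measurable (F : set T) := measurable_compact (finite_compact fF).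
have nuIF B : measurable B -> nu B = nu (B `&` F).
  by move=> mB; exact: measureI_conull.
split; apply/eqP; rewrite eq_le; apply/andP; split.
- apply: le_ereal_inf_tmp => _ [U [oU AU] <-].
  by apply: le_measure; rewrite ?inE //; exact: open_borel_measurable.
- apply: ereal_inf_lbound; exists (~` (F `\` A)).
    split; last by move=> y Ay [].
    apply: closed_openC; apply: compact_closed; first exact: norm_hausdorff.
    exact/finite_compact/finite_setD.
  have mFA : measurable (~` (F `\` A) : set T) by apply/measurableC/measurableD.
  apply: etrans (nuIF _ mFA) (etrans _ (esym (nuIF _ mA))); congr (nu _).
  apply/seteqP; split => y [Ay Fy]; split => //; last by case.
  by apply: contrapT => nAy; apply: Ay.
- apply: ereal_sup_ubound; exists (A `&` F); last exact/esym/nuIF.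
  by split; [exact/finite_compact/finite_setIr | exact: subIsetl].
- apply: ge_ereal_sup => _ [K [cK KA] <-].
  by apply: le_measure; rewrite ?inE //; exact: measurable_compact.
Qed.

Lemma M1fin_seq (nu : probability T R) : M1fin nu ->
  exists s : seq X, [/\ uniq s, [set` s] `<=` unit_sphere & nu (~` [set` s]) = 0%E].
Proof.
move=> [_ [F [/finite_seqP[s0 ->] s0S nus0]]].
have s0E : [set` undup s0] = [set` s0].
  by apply/seteqP; split => y; rewrite /= mem_undup.
exists (undup s0); rewrite s0E; split => //; first exact: undup_uniq.
rewrite probability_setC ?nus0 ?subee //.
exact: measurable_set_seq borel_measurable_set1 _.
Qed.

Lemma mass_fin_supp (nu : probability T R) (s : seq X) :
  uniq s -> nu (~` [set` s]) = 0%E -> \sum_(z <- s) fine (nu [set z]) = 1.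
Proof.
move=> us nus0; rewrite sum_fine => [|z _].
  rewrite (measure_fin_supp borel_measurable_set1) //.
  exact: (congr1 fine (probability_setT nu)).
by apply: fin_num_measure; exact: borel_measurable_set1.
Qed.

Lemma potential_fin_supp (nu : probability T R) (s : seq X) (x : X) :
  uniq s -> nu (~` [set` s]) = 0%E ->
  potential nu x = \sum_(z <- s) fine (nu [set z]) * `|x - z|.
Proof.
have nu_fin z : nu [set z] \is a fin_num.
  by apply: fin_num_measure; exact: borel_measurable_set1.
move=> us nus0; rewrite /potential /Rintegral.
rewrite (ge0_integral_fin_supp borel_measurable_set1 us nus0).
- rewrite -sum_fine => [|z _]; last by rewrite fin_numM ?nu_fin.
  by apply: eq_bigr => z _; rewrite fineM ?nu_fin //; exact: mulrC.
- by move/measurable_EFinP: (measurable_dist x).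
- by move=> y; rewrite lee_fin.
Qed.

Lemma inf_potential_le_sup (mu nu : probability T R) : M1fin mu -> M1fin nu ->
  inf (potential mu @` unit_sphere) <= sup (potential nu @` unit_sphere).
Proof.
move=> Mmu Mnu.
have [s [us sS mus0]] := M1fin_seq Mmu; have [t [ut tS nut0]] := M1fin_seq Mnu.
have w_ge0 (P : probability T R) z : 0 <= fine (P [set z]).
  exact/fine_ge0/measure_ge0.
have fubini : \sum_(x <- t) fine (nu [set x]) * potential mu x =
            \sum_(y <- s) fine (mu [set y]) * potential nu y.
  under eq_bigr do rewrite (potential_fin_supp _ us mus0) mulr_sumr.
  under [RHS]eq_bigr do rewrite (potential_fin_supp _ ut nut0) mulr_sumr.
  rewrite exchange_big; apply: eq_bigr => y _; apply: eq_bigr => x _.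
  by rewrite distrC mulrCA.
apply: le_trans (inf_le_wsum _ _ _ (mass_fin_supp ut nut0)) _.
- exact: has_lbound_potential.
- by move=> x xt; exists x => //; exact: tS.
- exact: w_ge0.
rewrite fubini; apply: wsum_le_sup (mass_fin_supp us mus0).
- exact: has_ubound_potential Mnu.1.2.
- by move=> y ys; exists y => //; exact: sS.
- exact: w_ge0.
Qed.

End finitely_supported_potential.

Section snap.
Context {R : realType} {X : normedModType R}.
Local Notation T := (@borelX R X).
Variables (e : R) (d : X).

(* Taking the first point of [s] within [e] of [y], rather than a nearest one,
   makes [snap s] a finite cascade of measurable case distinctions. *)
Fixpoint snap (s : seq X) (y : X) : X :=
  if s is c :: s' then if `|c - y| < e then c else snap s' y else d.

Lemma snap_in (s : seq X) (y : X) : snap s y \in d :: s.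
Proof.
elim: s => [|c s IH] /=; first by rewrite mem_head.
case: ifP => _; first by rewrite !inE eqxx orbT.
by move: IH; rewrite !inE => /orP[->|->]; rewrite ?orbT.
Qed.

Lemma snap_unit_sphere (s : seq X) (y : X) :
  unit_sphere d -> [set` s] `<=` unit_sphere -> unit_sphere (snap s y).
Proof. by move=> Sd sS; have := snap_in s y; rewrite inE => /orP[/eqP->|/sS]. Qed.

Lemma snap_close (s : seq X) (y : X) : (exists2 c, c \in s & `|c - y| < e) ->
  `|snap s y - y| < e.
Proof.
elim: s => [[c]|c s IH [c' c's c'y]] //=.
case: ifP => // ncy; apply: IH; exists c' => //.
by move: c's; rewrite inE => /orP[/eqP ce|//]; move: ncy; rewrite -ce c'y.
Qed.

Let measurable_near (c : X) : measurable_fun setT (fun y : T => `|c - y| < e).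
Proof.
by apply: measurable_fun_ltr; [exact: measurable_dist | exact: measurable_cst].
Qed.

Lemma measurable_snap (s : seq X) : measurable_fun setT (snap s : T -> T).
Proof.
elim: s => [|c s IH] /=; first exact: measurable_cst.
by apply: measurable_fun_ifT => //; exact: measurable_cst.
Qed.

Lemma measurable_snap_comp (s : seq X) (h : X -> X -> R) :
  (forall c, continuous (h ^~ c)) -> measurable_fun setT (fun y : T => h y (snap s y)).
Proof.
move=> hc; elim: s => [|c s IH] /=; first exact: continuous_borel_measurable.
have -> : (fun y : T => h y (if `|c - y| < e then c else snap s y)) =
          (fun y : T => if `|c - y| < e then h y c else h y (snap s y)).
  by apply: funext => y; case: ifP.
by apply: measurable_fun_ifT => //; exact: continuous_borel_measurable.
Qed.

Lemma measurable_snap_dist (s : seq X) :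
  measurable_fun setT (fun y : T => `|snap s y - y|).
Proof.
exact: (@measurable_snap_comp s (fun y c => `|c - y|))
  (fun c => dist_continuous (x := c)).
Qed.

End snap.

Section approximation.
Context {R : realType} {X : normedModType R}.
Local Notation T := (@borelX R X).

Lemma distribution_setC0 (mu : probability T R) (f : {mfun T >-> T}) (A : set T) :
  (forall y, A (f y)) -> distribution mu f (~` A) = 0%E.
Proof.
move=> fA; rewrite /distribution /pushforward (_ : _ @^-1` _ = set0) ?measure0 //.
by apply/seteqP; split => y //=; apply.
Qed.

Lemma M1fin_distribution (mu : probability T R) (f : {mfun T >-> T}) (F : set X) :
  finite_set F -> F `<=` unit_sphere -> (forall y, F (f y)) ->
  M1fin (distribution mu f).
Proof.
move=> fF FS fyF; have nuF0 := distribution_setC0 mu fyF.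
split; first split.
- exact: regular_fin_supp fF nuF0.
- by apply: distribution_setC0 => y; apply: FS.
- exists F; split => //; rewrite /distribution /pushforward /=.
  rewrite -(probability_setT mu); congr (mu _).
  by apply/seteqP; split => // y _; exact: fyF.
Qed.

Lemma potential_distribution_dist_le (mu : probability T R) (f : {mfun T >-> T})
    (D : R) :
  mu (~` unit_sphere) = 0%E -> (forall y, unit_sphere (f y)) ->
  measurable_fun setT (fun y : T => `|f y - y|) ->
  (\int[mu]_y (`|f y - y|)%:E <= D%:E)%E ->
  forall x, `|potential (distribution mu f) x - potential mu x| <= D.
Proof.
move=> mu0 fS mfy fD x.
have nu0 := distribution_setC0 mu fS.
have mfx : measurable_fun setT (fun y : T => `|x - f y|).
  exact: measurableT_comp (measurable_dist x) (measurable_funP f).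
have Ef : (potential (distribution mu f) x)%:E = (\int[mu]_y (`|x - f y|)%:E)%E.
  rewrite potentialE // ge0_integral_distribution //.
  by move/measurable_EFinP: (measurable_dist x).
have le1 : potential (distribution mu f) x <= potential mu x + D.
  rewrite -lee_fin Ef EFinD potentialE //; apply: le_trans (leeD2l _ fD).
  apply: ge0_le_integralD => //; first exact: measurable_dist.
  by move=> y; rewrite (distrC (f y)); exact: ler_distD.
have le2 : potential mu x <= potential (distribution mu f) x + D.
  rewrite -lee_fin potentialE // EFinD Ef; apply: le_trans (leeD2l _ fD).
  apply: ge0_le_integralD => //; first exact: measurable_dist.
  by move=> y; exact: ler_distD.
by rewrite ler_distl lerBlDr le1 le2.
Qed.

Lemma compact_finite_net (K : set X) (e : R) : compact K -> 0 < e ->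
  exists s : seq X,
    [set` s] `<=` K /\ forall y, K y -> exists2 c, c \in s & `|c - y| < e.
Proof.
rewrite compact_cover => cK e0.
have [D DK KD] := cK X K (fun k => ball k e) (fun k _ => ball_open k e)
  (fun y Ky => ex_intro2 K (fun k => ball k e y) y Ky (ballxx y e0)).
exists (finmap.enum_fset D); split; first by move=> c /DK; rewrite inE.
by move=> y /KD[c cD]; rewrite -ball_normE; exists c.
Qed.

Lemma regular_inner_compact (mu : probability T R) (A : set T) (e : R) :
  regular mu -> measurable A -> 0 < e ->
  exists K : set X, [/\ compact K, K `<=` A & (mu (A `\` K) <= e%:E)%E].
Proof.
move=> reg mA e0; have [_ inner] := reg A mA.
have muA_fin : mu A \is a fin_num by exact: fin_num_measure.
have : (mu A - e%:E < mu A)%E by rewrite gte_subl.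
rewrite {2}inner => /ereal_sup_gt[_ [K [cK KA] <-] muK]; exists K; split => //.
have mK : measurable (K : set T) := measurable_compact cK.
rewrite measureD //; last by rewrite ltey_eq muA_fin.
rewrite setIidr // leeBlDr ?fin_num_measure //.
by move: muK; rewrite lteBlDr // addeC => /ltW.
Qed.

Lemma integral_snap_dist_le (mu : probability T R) (K : set X) (e : R) (d : X)
    (s : seq X) :
  mu (~` unit_sphere) = 0%E -> measurable (K : set T) -> K `<=` unit_sphere ->
  (mu (unit_sphere `\` K) <= e%:E)%E -> unit_sphere d -> [set` s] `<=` unit_sphere ->
  (forall y, K y -> exists2 c, c \in s & `|c - y| < e) ->
  (\int[mu]_y (`|snap e d s y - y|)%:E <= (3 * e)%:E)%E.
Proof.
move=> mu0 mK KS muSK Sd sS Knet.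
have e0 : 0 <= e by rewrite -lee_fin (le_trans (measure_ge0 _ _) muSK).
have mS := @measurable_unit_sphere R X.
have mf : measurable_fun setT (fun y : T => (`|snap e d s y - y|)%:E).
  by move/measurable_EFinP: (measurable_snap_dist e d s).
rewrite (ge0_negligible_integral _ _ _ _ mu0) //; last exact: measurableC.
rewrite setTD setCK -(setDUK KS) ge0_integral_setU //; first last.
- by rewrite disj_set2E setDIK.
- exact: measurable_funS mf.
- exact: measurableD.
have onK : (\int[mu]_(y in K) (`|snap e d s y - y|)%:E <= e%:E)%E.
  apply: le_trans (_ : \int[mu]_(y in K) e%:E <= _)%E.
    apply: ge0_le_integral => //; first exact: measurable_funS mf.
    by move=> y Ky; rewrite lee_fin ltW // snap_close //; exact: Knet.
  by rewrite integral_cst // -[leRHS]mule1 lee_wpmul2l ?lee_fin // probability_le1.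
have offK :
    (\int[mu]_(y in unit_sphere `\` K) (`|snap e d s y - y|)%:E <= (2 * e)%:E)%E.
  apply: le_trans (_ : \int[mu]_(y in unit_sphere `\` K) 2%:E <= _)%E.
    apply: ge0_le_integral => //; [exact: measurableD | exact: measurable_funS mf |].
    move=> y [Sy _]; rewrite lee_fin (le_trans (ler_normB _ _)) //.
    by rewrite (snap_unit_sphere _ _ Sd sS) Sy.
  by rewrite integral_cst ?EFinM ?lee_wpmul2l //; exact: measurableD.
by apply: le_trans (leeD onK offK) _; rewrite -EFinD lee_fin; lra.
Qed.

End approximation.

Section main.
Context {R : realType} {X : normedModType R}.
Local Notation T := (@borelX R X).

Lemma M1fin_approx (mu : probability T R) (e : R) : M1 mu -> 0 < e ->
  exists2 nu : probability T R, M1fin nu &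
    forall x, `|potential nu x - potential mu x| <= e.
Proof.
move=> [reg mu0] e0; have e3 : 0 < e / 3 by lra.
have [K [cK KS muSK]] := regular_inner_compact reg (@measurable_unit_sphere R X) e3.
have [s [sK Knet]] := compact_finite_net cK e3.
have [d Sd] := unit_sphere_nonempty mu0.
have sS : [set` s] `<=` unit_sphere := subset_trans sK KS.
have mK : measurable (K : set T) := measurable_compact cK.
exists (distribution mu (mfun_Sub (mem_set (measurable_snap (e / 3) d s)))).
  apply: (@M1fin_distribution _ _ _ _ [set` (d :: s)]).
  - by apply/finite_seqP; exists (d :: s).
  - by move=> z; rewrite /= inE => /orP[/eqP->|/sS].
  - exact: snap_in.
apply: potential_distribution_dist_le => //.
- by move=> y; exact: snap_unit_sphere.
- exact: measurable_snap_dist.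
- apply: le_trans (integral_snap_dist_le mu0 mK KS muSK Sd sS Knet) _.
  by rewrite lee_fin; lra.
Qed.

Lemma calR_sub_calA : calR R X `<=` calA R X.
Proof.
move=> r Rr mu Mmu; have Sne := unit_sphere_nonempty Mmu.2.
apply/andP; split; apply/ler_addgt0Pr => e e0;
  have [nu Mnu close] := M1fin_approx Mmu e0; have /andP[nu_inf nu_sup] := Rr nu Mnu.
- apply: le_trans (inf_image_le Sne (has_lbound_potential mu) _) _.
    by move=> x _; exact: ler_distlCDr (close x).
  by rewrite lerD2r.
- apply: le_trans nu_sup (sup_image_le Sne (has_ubound_potential Mmu.2) _).
  by move=> x _; exact: ler_distlDr (close x).
Qed.

Lemma calR_nonempty : calR R X !=set0.
Proof.
exists (sup [set inf (potential mu @` unit_sphere) | mu in @M1fin R X]) => nu Mnu.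
apply/andP; split.
- apply: ub_le_sup; last by exists nu.
  exists (sup (potential nu @` unit_sphere)) => _ [mu Mmu <-].
  exact: inf_potential_le_sup.
- apply: ge_sup; first by exists (inf (potential nu @` unit_sphere)), nu.
  by move=> _ [mu Mmu <-]; exact: inf_potential_le_sup.
Qed.

End main.

Theorem theorem3p1 (R : realType) (X : normedModType R) :
  calA R X = calR R X /\ calA R X <> set0.
Proof.
have AR : calA R X = calR R X.
  apply/seteqP; split; last exact: calR_sub_calA.
  by move=> r Ar mu Mmu; exact: Ar _ Mmu.1.
split => //; rewrite AR; apply/eqP/set0P; exact: calR_nonempty.
Qed.
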